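(* Let $1<p<\infty$ and let $w:\mathbb N_0\to(0,\infty)$ satisfy $w(n_1)\le w(n_2)$ for $n_1<n_2$ and $\lim_{n\to\infty}w(n)=\infty$. Suppose there is a non-negative, decreasing $f\in C^1[0,\infty)$ with $f(0)=1$ and constants $\tau_0>0$, $C_w>0$ such that $$\sum_{n\in\mathbb N_0}w(n)f(\tau w(n))\le C_w\tau^{-1}\quad\forall\tau\in(0,\tau_0].$$ Set $X=\ell^p(w)$, $V=\ell^1$, $U=\ell^\infty(w)$, $a=\frac1{p-1}$, $X_s=\ell^{p_s}(w)$ with $p_s=\frac{p}{1+s(p-1)}$ for $s\in[0,1]$, $t_0=\tau_0^{1/(1+a)}$, and $(P_tx)(n)=f(t^{a+1}w(n))x(n)$ for $x\in\ell^p(w)$, $t\in(0,t_0]$. Then: (i) the embeddings $V\hookrightarrow X\hookrightarrow U$ are continuous; (ii) $X_0=X$, $X_1=V$, and $X_s\hookrightarrow X_t$ continuously for $0\le t\le s\le1$; (iii) for all $s\in(0,1]$ and $r\in[0,s)$ there is $L>0$ with $\|x\|_{X_r}\le L\|x\|_{X_s}^{\frac{r+a}{a+s}}\|x\|_U^{\frac{s-r}{a+s}}$ for all $x\in X_s$; (iv) for all $s\in[0,1]$ and $t\in(0,t_0]$, $P_tX_s\subset X_s$ and $C_P:=\sup_{0<t\le t_0}\|P_t\|_{X_s\to X_s}<\infty$, and for each $x\in X$ the map $t\mapsto P_tx$ is continuous from $(0,t_0]$ into $X$; (v) for every $0<s<1$ there is $C_{Proj}\ge C_P+1$ such that for all $0<t\le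 t_0$, $\|P_t-\mathrm{id}\|_{X_s\to U}\le C_{Proj}t^{a+s}$ and $\|P_t\|_{X_s\to V}\le C_{Proj}t^{s-1}$.
   Context: For $w:\mathbb N_0\to(0,\infty)$ and $1\le p<\infty$, $\ell^p(w)$ is the space of sequences $x=\{x(n)\}_{n\ge0}$ with $\|x\|_{\ell^p(w)}=\big(\sum_{n\in\mathbb N_0}w(n)^{1-p}|x(n)|^p\big)^{1/p}<\infty$ (so $\ell^1(w)=\ell^1$), and $\ell^\infty(w)$ is the space of sequences with $\|x\|_{\ell^\infty(w)}=\sup_{n}|w(n)^{-1}x(n)|<\infty$. *)

From Stdlib Require Export Reals.
From Coquelicot Require Export Coquelicot.
Open Scope R_scope.

(* x ^ y for x >= 0 and any real y, with the convention 0 ^ y = 0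
   (only used with y > 0 or x > 0). *)
Definition rpow (x y : R) : R :=
  if Req_EM_T x 0 then 0 else Rpower x y.

Definition lp_term (q : R) (w x : nat -> R) (n : nat) : R :=
  Rpower (w n) (1 - q) * rpow (Rabs (x n)) q.
Definition in_lp (q : R) (w : nat -> R) (x : nat -> R) : Prop :=
  ex_series (lp_term q w x).
Definition lp_norm (q : R) (w : nat -> R) (x : nat -> R) : R :=
  rpow (Series (lp_term q w x)) (/ q).

Definition in_l1 (x : nat -> R) : Prop := ex_series (fun n => Rabs (x n)).
Definition l1_norm (x : nat -> R) : R := Series (fun n => Rabs (x n)).

Definition in_linf (w : nat -> R) (x : nat -> R) : Prop :=
  exists M, forall n, Rabs (x n / w n) <= M.
Definition linf_norm (w : nat -> R) (x : nat -> R) : R :=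
  real (Sup_seq (fun n => Rabs (x n / w n))).

Definition cont_embed (memA : (nat -> R) -> Prop) (nA : (nat -> R) -> R)
    (memB : (nat -> R) -> Prop) (nB : (nat -> R) -> R) : Prop :=
  (forall x, memA x -> memB x) /\
  exists C, 0 <= C /\ forall x, memA x -> nB x <= C * nA x.

Definition op_bounded_by (memA : (nat -> R) -> Prop) (nA : (nat -> R) -> R)
    (memB : (nat -> R) -> Prop) (nB : (nat -> R) -> R)
    (T : (nat -> R) -> (nat -> R)) (c : R) : Prop :=
  forall x, memA x -> memB (T x) /\ nB (T x) <= c * nA x.

(* operator norm ||T||_{A -> B} = inf { c >= 0 | ||Tx|| <= c ||x|| },
   = +oo if T does not map A boundedly into B *)
Definition opnorm (memA : (nat -> R) -> Prop) (nA : (nat -> R) -> R)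
    (memB : (nat -> R) -> Prop) (nB : (nat -> R) -> R)
    (T : (nat -> R) -> (nat -> R)) : Rbar :=
  Glb_Rbar (fun c => 0 <= c /\ op_bounded_by memA nA memB nB T c).

Definition C1_nonneg (f : R -> R) : Prop :=
  exists df : R -> R,
    (forall x, 0 <= x ->
       filterlim (fun y => (f y - f x) / (y - x))
         (within (fun y => 0 <= y /\ y <> x) (locally x)) (locally (df x))) /\
    (forall x, 0 <= x ->
       filterlim df (within (fun y => 0 <= y) (locally x)) (locally (df x))).

Definition a_exp (p : R) : R := / (p - 1).
Definition p_s (p s : R) : R := p / (1 + s * (p - 1)).
Definition t0_of (p tau0 : R) : R := Rpower tau0 (/ (1 + a_exp p)).

Definition P_op (f : R -> R) (w : nat -> R) (p t : R) (x : nat -> R) : nat -> R :=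
  fun n => f (Rpower t (a_exp p + 1) * w n) * x n.

(* C_P(s) = sup_{0<t<=t0} ||P_t||_{X_s -> X_s} (over the finite values) *)
Definition CP_sup (f : R -> R) (w : nat -> R) (p t0 s : R) : Rbar :=
  Lub_Rbar (fun c => exists t, 0 < t <= t0 /\
     opnorm (in_lp (p_s p s) w) (lp_norm (p_s p s) w)
            (in_lp (p_s p s) w) (lp_norm (p_s p s) w) (P_op f w p t) = Finite c).

From Stdlib Require Import Reals Lra Lia.
From Coquelicot Require Import Coquelicot.
Open Scope R_scope.

(* Everything is governed by the weighted ratio y(n) = |x(n)| / w(n): the l^q(w) norm is
   (sum_n w(n) y(n)^q)^(1/q) and the l^oo(w) norm is sup_n y(n).  As w >= w(0), every
   y(n) is at most w(0)^(-1/q) ||x||_q, and splitting y^r = y^q y^(r-q) gives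
   ||x||_r <= ||x||_oo^(1 - q/r) ||x||_q^(q/r) for q <= r.  This yields the embeddings and,
   since p_s / p_r = (r + a) / (a + s), the interpolation inequality (iii).

   P_t multiplies by values of f in [0,1], so it contracts every l^q(w), and t |-> P_t x is
   continuous by dominated convergence for series.  Put tau = t^(a+1).  Since f is C^1 and
   bounded, |f(u) - 1| <= K u, which bounds (P_t - id) x in l^oo(w) by (K tau)^(1/q) ||x||_q.
   Young's inequality f y <= lam f + lam^(1-q) y^q, summed against
   sum_n w(n) f(tau w(n)) <= C_w / tau and optimised in lam, bounds ||P_t x||_1 by
   2 (C_w / tau)^(1 - 1/q) ||x||_q.  The powers of t come from (a + 1) / p_s = a + s. *)

Lemma rpow_0_l y : rpow 0 y = 0.
Proof. unfold rpow; destruct (Req_EM_T 0 0); [reflexivity | congruence]. Qed.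

Lemma rpow_Rpower x y : 0 < x -> rpow x y = Rpower x y.
Proof. intros Hx; unfold rpow; destruct (Req_EM_T x 0); [lra | reflexivity]. Qed.

Lemma Rpower_gt0 x y : 0 < Rpower x y.
Proof. apply exp_pos. Qed.

Lemma rpow_ge0 x y : 0 <= rpow x y.
Proof. unfold rpow; destruct (Req_EM_T x 0); [lra | left; apply Rpower_gt0]. Qed.

Lemma rpow_gt0 x y : 0 < x -> 0 < rpow x y.
Proof. intros Hx; rewrite rpow_Rpower by exact Hx; apply Rpower_gt0. Qed.

Lemma rpow_mult_distr a b y : 0 <= a -> 0 <= b -> rpow (a * b) y = rpow a y * rpow b y.
Proof.
  intros Ha Hb.
  destruct Ha as [Ha | <-]; [| rewrite Rmult_0_l, !rpow_0_l; ring].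
  destruct Hb as [Hb | <-]; [| rewrite Rmult_0_r, !rpow_0_l; ring].
  rewrite !rpow_Rpower by (try apply Rmult_lt_0_compat; assumption).
  symmetry; apply Rpower_mult_distr; assumption.
Qed.

Lemma rpow_plus a y z : 0 <= a -> rpow a (y + z) = rpow a y * rpow a z.
Proof.
  intros [Ha | <-]; [| rewrite !rpow_0_l; ring].
  rewrite !rpow_Rpower by exact Ha; apply Rpower_plus.
Qed.

Lemma rpow_rpow a y z : 0 <= a -> rpow (rpow a y) z = rpow a (y * z).
Proof.
  intros [Ha | <-]; [| rewrite !rpow_0_l; ring].
  rewrite (rpow_Rpower a y), !rpow_Rpower by (try apply Rpower_gt0; exact Ha).
  apply Rpower_mult.
Qed.

Lemma rpow_1 a : 0 <= a -> rpow a 1 = a.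
Proof.
  intros [Ha | <-]; [rewrite rpow_Rpower by exact Ha; apply Rpower_1, Ha | apply rpow_0_l].
Qed.

Lemma rpow_rpow_inv a q : 0 <= a -> q <> 0 -> rpow (rpow a q) (/ q) = a.
Proof. intros Ha Hq; rewrite rpow_rpow, Rinv_r by assumption; apply rpow_1, Ha. Qed.

Lemma rpow_le_l a b e : 0 <= e -> 0 <= a <= b -> rpow a e <= rpow b e.
Proof.
  intros He [[Ha | <-] Hab]; [| rewrite rpow_0_l; apply rpow_ge0].
  rewrite !rpow_Rpower by lra; apply Rle_Rpower_l; lra.
Qed.

Lemma rpow_lt_l a b e : 0 < e -> 0 <= a < b -> rpow a e < rpow b e.
Proof.
  intros He [[Ha | <-] Hab]; [| rewrite rpow_0_l; apply rpow_gt0; lra].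
  rewrite !rpow_Rpower by lra; apply Rlt_Rpower_l; lra.
Qed.

Lemma Rpower_1_l c : Rpower 1 c = 1.
Proof. unfold Rpower; rewrite ln_1, Rmult_0_r; apply exp_0. Qed.

Lemma rpow_le_self z e : 0 <= z <= 1 -> 1 <= e -> rpow z e <= z.
Proof.
  intros [[Hz | <-] Hz1] He; [| rewrite rpow_0_l; lra].
  rewrite rpow_Rpower by exact Hz.
  replace e with (1 + (e - 1)) by ring; rewrite Rpower_plus, Rpower_1 by exact Hz.
  assert (Hle : Rpower z (e - 1) <= Rpower 1 (e - 1)) by (apply Rle_Rpower_l; lra).
  rewrite Rpower_1_l in Hle; pose proof (Rpower_gt0 z (e - 1)); nra.
Qed.

Lemma le_rpow_inv_of_rpow_le y B q : 0 <= y -> 0 < q -> rpow y q <= B -> y <= rpow B (/ q).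
Proof.
  intros Hy Hq HyB.
  rewrite <- (rpow_rpow_inv y q) by lra.
  apply rpow_le_l; [left; apply Rinv_0_lt_compat, Hq | split; [apply rpow_ge0 | exact HyB]].
Qed.

Lemma Rpower_le_nonpos_exp l y e : 0 < l <= y -> e <= 0 -> Rpower y e <= Rpower l e.
Proof.
  intros Hly He; unfold Rpower.
  assert (ln l <= ln y)
    by (destruct (Req_dec l y) as [-> | ]; [lra | left; apply ln_increasing; lra]).
  destruct (Req_dec (e * ln y) (e * ln l)) as [-> | ]; [lra | left; apply exp_increasing; nra].
Qed.

Lemma ex_series_le_nonneg (a b : nat -> R) :
  (forall n, 0 <= a n <= b n) -> ex_series b -> ex_series a.
Proof.
  intros Hab Hb; apply (ex_series_le a b); [| exact Hb]; intros n.
  change norm with Rabs; simpl; rewrite Rabs_pos_eq; apply Hab.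
Qed.

Lemma partial_sum_le_Series a N :
  (forall n, 0 <= a n) -> ex_series a -> sum_f_R0 a N <= Series a.
Proof. intros Ha Hex; apply sum_incr; [apply is_series_Reals, Series_correct, Hex | exact Ha]. Qed.

Lemma Series_ge0 a : (forall n, 0 <= a n) -> ex_series a -> 0 <= Series a.
Proof.
  intros Ha Hex; apply Rle_trans with (sum_f_R0 a 0); [apply Ha |].
  apply partial_sum_le_Series; assumption.
Qed.

Lemma term_le_Series a n : (forall k, 0 <= a k) -> ex_series a -> a n <= Series a.
Proof.
  intros Ha Hex; apply Rle_trans with (sum_f_R0 a n); [| apply partial_sum_le_Series; assumption].
  destruct n as [| n]; simpl; [lra |]. pose proof (cond_pos_sum a n Ha); lra.
Qed.

Lemma Series_tail_small a eps :
  ex_series a -> 0 < eps -> exists N, Series a - sum_f_R0 a N < eps.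
Proof.
  intros Hex Heps.
  destruct (proj1 (is_series_Reals _ _) (Series_correct a Hex) eps Heps) as [N HN].
  exists N; specialize (HN N (le_n N)); unfold Rdist in HN.
  rewrite Rabs_minus_sym in HN; pose proof (Rle_abs (Series a - sum_f_R0 a N)); lra.
Qed.

Lemma Series_le_partial_sum_tail (a b : nat -> R) N :
  (forall n, 0 <= a n <= b n) -> ex_series b ->
  Series a <= sum_f_R0 a N + (Series b - sum_f_R0 b N).
Proof.
  intros Hab Hb. assert (Ha : ex_series a) by (apply (ex_series_le_nonneg a b); assumption).
  rewrite (Series_incr_n a (S N)), (Series_incr_n b (S N)) by (lia || assumption); simpl.
  assert (Series (fun k => a (S (N + k))) <= Series (fun k => b (S (N + k)))); [| lra].
  apply Series_le; [intros k; apply Hab | apply (ex_series_incr_n b (S N)), Hb].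
Qed.

Section VanishingNearPoint.
Variables (P : R -> Prop) (t : R).

Definition vanishes_near (g : R -> R) : Prop :=
  forall eps, 0 < eps -> exists d, 0 < d /\ forall s, P s -> Rabs (s - t) < d -> g s < eps.

Lemma partial_sum_vanishes_near (D : R -> nat -> R) N :
  (forall n, vanishes_near (fun s => D s n)) -> vanishes_near (fun s => sum_f_R0 (D s) N).
Proof.
  intros HD; induction N as [| N IH]; [apply HD |]; intros eps Heps.
  destruct (IH (eps / 2)) as [d1 [Hd1 H1]]; [lra |].
  destruct (HD (S N) (eps / 2)) as [d2 [Hd2 H2]]; [lra |].
  exists (Rmin d1 d2); split; [apply Rmin_pos; assumption |]; intros s Hs Hst; simpl.
  specialize (H1 s Hs (Rlt_le_trans _ _ _ Hst (Rmin_l _ _))).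
  specialize (H2 s Hs (Rlt_le_trans _ _ _ Hst (Rmin_r _ _))); lra.
Qed.

Lemma Series_dominated_vanishes_near (D : R -> nat -> R) (b : nat -> R) :
  ex_series b -> (forall s n, P s -> 0 <= D s n <= b n) ->
  (forall n, vanishes_near (fun s => D s n)) -> vanishes_near (fun s => Series (D s)).
Proof.
  intros Hb Hdom HD eps Heps.
  destruct (Series_tail_small b (eps / 2) Hb) as [N HN]; [lra |].
  destruct (partial_sum_vanishes_near D N HD (eps / 2)) as [d [Hd Hhead]]; [lra |].
  exists d; split; [exact Hd |]; intros s Hs Hst.
  pose proof (Series_le_partial_sum_tail (D s) b N (fun n => Hdom s n Hs) Hb).
  specialize (Hhead s Hs Hst); lra.
Qed.

End VanishingNearPoint.

Lemma Sup_seq_bounded (u : nat -> R) B :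
  (forall n, 0 <= u n <= B) -> (forall n, u n <= real (Sup_seq u)) /\ real (Sup_seq u) <= B.
Proof.
  intros Hu. destruct (is_sup_seq_lub _ _ (Sup_seq_correct u)) as [Hub Hlub].
  assert (Hge : forall n, Rbar_le (u n) (Sup_seq u))
    by (intros n; apply Hub; exists n; reflexivity).
  assert (Hle : Rbar_le (Sup_seq u) B) by (apply Hlub; intros x [n ->]; apply Hu).
  pose proof (Hge 0%nat) as H0.
  destruct (Sup_seq u); simpl in *; tauto.
Qed.

Lemma Lub_Rbar_finite (E : R -> Prop) c B :
  E c -> (forall x, E x -> x <= B) -> is_finite (Lub_Rbar E).
Proof.
  intros Hc HB. destruct (Lub_Rbar_correct E) as [Hub Hlub].
  pose proof (Hub c Hc) as Hge.
  assert (Hle : Rbar_le (Lub_Rbar E) B) by (apply Hlub; intros x Hx; apply HB, Hx).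
  destruct (Lub_Rbar E); simpl in *; try tauto; reflexivity.
Qed.

Lemma opnorm_le memA nA memB nB T c :
  0 <= c -> op_bounded_by memA nA memB nB T c -> Rbar_le (opnorm memA nA memB nB T) c.
Proof. intros Hc HT; apply (proj1 (Glb_Rbar_correct _)); split; assumption. Qed.

Lemma opnorm_le_weaken memA nA memB nB T c c' :
  0 <= c <= c' -> op_bounded_by memA nA memB nB T c -> Rbar_le (opnorm memA nA memB nB T) c'.
Proof.
  intros Hc HT; eapply Rbar_le_trans; [apply opnorm_le; [apply Hc | exact HT] | apply Hc].
Qed.

Lemma opnorm_finite memA nA memB nB T c :
  0 <= c -> op_bounded_by memA nA memB nB T c -> is_finite (opnorm memA nA memB nB T).
Proof.
  intros Hc HT. pose proof (opnorm_le _ _ _ _ _ _ Hc HT) as Hle.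
  assert (Hge : Rbar_le 0 (opnorm memA nA memB nB T))
    by (apply (proj2 (Glb_Rbar_correct _)); intros x [Hx _]; exact Hx).
  destruct (opnorm memA nA memB nB T); simpl in *; try tauto; reflexivity.
Qed.

Lemma CP_sup_finite f w p t0 s :
  0 < t0 ->
  (forall t, 0 < t <= t0 ->
     op_bounded_by (in_lp (p_s p s) w) (lp_norm (p_s p s) w)
                   (in_lp (p_s p s) w) (lp_norm (p_s p s) w) (P_op f w p t) 1) ->
  is_finite (CP_sup f w p t0 s).
Proof.
  intros Ht0 HP. apply Lub_Rbar_finite with (B := 1)
    (c := real (opnorm (in_lp (p_s p s) w) (lp_norm (p_s p s) w)
                       (in_lp (p_s p s) w) (lp_norm (p_s p s) w) (P_op f w p t0))).
  - exists t0; split; [lra |].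
    symmetry; apply (opnorm_finite _ _ _ _ _ 1); [lra | apply HP; lra].
  - intros c [t [Ht Hc]]. pose proof (opnorm_le _ _ _ _ _ 1 ltac:(lra) (HP t Ht)) as H.
    rewrite Hc in H; exact H.
Qed.

Lemma young_split phi y lam q :
  0 <= phi <= 1 -> 0 <= y -> 0 < lam -> 1 <= q ->
  phi * y <= lam * phi + Rpower lam (1 - q) * rpow y q.
Proof.
  intros Hphi Hy Hlam Hq.
  pose proof (rpow_ge0 y q); pose proof (Rpower_gt0 lam (1 - q)).
  destruct (Rle_lt_dec y lam) as [Hyl | Hyl]; [nra |].
  assert (Hsplit : y = rpow y q * Rpower y (1 - q)).
  { rewrite rpow_Rpower, <- Rpower_plus by lra.
    replace (q + (1 - q)) with 1 by ring; rewrite Rpower_1; lra. }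
  pose proof (Rpower_le_nonpos_exp lam y (1 - q) ltac:(lra) ltac:(lra)).
  assert (y <= rpow y q * Rpower lam (1 - q))
    by (rewrite Hsplit at 1; apply Rmult_le_compat_l; lra).
  nra.
Qed.

Lemma le_of_young_family L A S q :
  0 < A -> 0 <= S -> q <> 0 ->
  (forall lam, 0 < lam -> L <= lam * A + Rpower lam (1 - q) * S) ->
  L <= 2 * Rpower A (1 - / q) * rpow S (/ q).
Proof.
  intros HA [HS | <-] Hq HL.
  - (* lam = (S / A)^(1/q) balances the two terms *)
    specialize (HL (Rpower (S / A) (/ q)) (Rpower_gt0 _ _)).
    rewrite rpow_Rpower by exact HS.
    assert (Hval : Rpower (S / A) (/ q) * A + Rpower (Rpower (S / A) (/ q)) (1 - q) * S
                   = 2 * (Rpower A (1 - / q) * Rpower S (/ q))).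
    { rewrite Rpower_mult; unfold Rpower, Rdiv.
      rewrite ln_mult, ln_Rinv by (try apply Rinv_0_lt_compat; lra).
      rewrite <- (exp_ln A) at 2 by exact HA; rewrite <- (exp_ln S) at 3 by exact HS.
      rewrite <- !exp_plus.
      replace (/ q * (ln S + - ln A) + ln A) with ((1 - / q) * ln A + / q * ln S)
        by (field; exact Hq).
      replace (/ q * (1 - q) * (ln S + - ln A) + ln S) with ((1 - / q) * ln A + / q * ln S)
        by (field; exact Hq).
      ring. }
    lra.
  - rewrite rpow_0_l, Rmult_0_r.
    apply Rnot_lt_le; intros HL0.
    specialize (HL (L / (2 * A)) ltac:(apply Rdiv_lt_0_compat; lra)).
    replace (L / (2 * A) * A) with (L / 2) in HL by (field; lra). lra.
Qed.

Lemma C1_locally_lipschitz f u0 :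
  C1_nonneg f -> 0 <= u0 ->
  exists d L, 0 < d /\ 0 < L /\
    forall u, 0 <= u -> Rabs (u - u0) < d -> Rabs (f u - f u0) <= L * Rabs (u - u0).
Proof.
  intros [df [Hdf _]] Hu0.
  destruct (Hdf u0 Hu0 (ball (df u0) (mkposreal 1 Rlt_0_1)) (locally_ball _ _)) as [d Hd].
  exists d, (Rabs (df u0) + 1); split; [apply cond_pos |].
  split; [pose proof (Rabs_pos (df u0)); lra |].
  intros u Hu Hud. destruct (Req_dec u u0) as [-> | Hne].
  { unfold Rminus; rewrite !Rplus_opp_r, Rabs_R0; lra. }
  specialize (Hd u Hud (conj Hu Hne)).
  set (slope := (f u - f u0) / (u - u0)) in Hd.
  replace (f u - f u0) with (slope * (u - u0)) by (unfold slope; field; lra).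
  rewrite Rabs_mult; apply Rmult_le_compat_r; [apply Rabs_pos |].
  change (Rabs (slope - df u0) < 1) in Hd; pose proof (Rabs_triang_inv slope (df u0)); lra.
Qed.

Lemma C1_continuous f u0 :
  C1_nonneg f -> 0 <= u0 ->
  forall eps, 0 < eps -> exists d, 0 < d /\
    forall u, 0 <= u -> Rabs (u - u0) < d -> Rabs (f u - f u0) < eps.
Proof.
  intros Hf Hu0 eps Heps. destruct (C1_locally_lipschitz f u0 Hf Hu0) as [d [L [Hd [HL Hlip]]]].
  assert (HeL : 0 < eps / L) by (apply Rdiv_lt_0_compat; assumption).
  exists (Rmin d (eps / L)); split; [apply Rmin_pos; assumption |]; intros u Hu Hud.
  pose proof (Rmin_l d (eps / L)); pose proof (Rmin_r d (eps / L)).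
  eapply Rle_lt_trans; [apply Hlip; [exact Hu | lra] |].
  apply Rmult_lt_reg_r with (/ L); [apply Rinv_0_lt_compat, HL |].
  replace (L * Rabs (u - u0) * / L) with (Rabs (u - u0)) by (field; lra).
  change (eps * / L) with (eps / L); lra.
Qed.

Lemma C1_lipschitz_at_0 f B :
  C1_nonneg f -> (forall u, 0 <= u -> Rabs (f u - f 0) <= B) ->
  exists K, 0 < K /\ forall u, 0 <= u -> Rabs (f u - f 0) <= K * u.
Proof.
  intros Hf HB. destruct (C1_locally_lipschitz f 0 Hf (Rle_refl 0)) as [d [L [Hd [HL Hlip]]]].
  assert (HB0 : 0 <= B) by (specialize (HB 0 (Rle_refl 0)); pose proof (Rabs_pos (f 0 - f 0)); lra).
  assert (HBd : 0 <= B / d) by (apply Rdiv_le_0_compat; assumption).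
  (* near 0 use the local Lipschitz bound, away from 0 use B <= (B / d) u *)
  exists (L + B / d); split; [lra |]; intros u Hu.
  destruct (Rlt_le_dec u d) as [Hud | Hud].
  - specialize (Hlip u Hu); rewrite Rminus_0_r, Rabs_pos_eq in Hlip by exact Hu.
    specialize (Hlip Hud); nra.
  - assert (B / d * u - B = B / d * (u - d)) by (field; lra).
    specialize (HB u Hu); nra.
Qed.

Lemma Rpower_continuous_l e t :
  0 < t -> forall eps, 0 < eps -> exists d, 0 < d /\
    forall t', 0 < t' -> Rabs (t' - t) < d -> Rabs (Rpower t' e - Rpower t e) < eps.
Proof.
  intros Ht eps Heps.
  assert (Hc : continuity_pt (fun x => Rpower x e) t).
  { apply derivable_continuous_pt; exists (e * Rpower t (e - 1)).
    apply derivable_pt_lim_power, Ht. }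
  destruct (Hc eps Heps) as [d [Hd Hnear]]; exists d; split; [exact Hd |]; intros t' Ht' Htd.
  destruct (Req_dec t' t) as [-> | Hne].
  - unfold Rminus; rewrite Rplus_opp_r, Rabs_R0; exact Heps.
  - apply (Hnear t'); split; [split; [exact I | congruence] | exact Htd].
Qed.

Lemma f_unit_range f :
  (forall x, 0 <= x -> 0 <= f x) -> (forall x y, 0 <= x <= y -> f y <= f x) -> f 0 = 1 ->
  forall u, 0 <= u -> 0 <= f u <= 1.
Proof. intros Hge0 Hanti H0 u Hu; split; [apply Hge0, Hu | rewrite <- H0; apply Hanti; lra]. Qed.

Lemma p_s_pos p s : 1 < p -> 0 <= s -> 0 < p_s p s.
Proof. intros Hp Hs; unfold p_s; apply Rdiv_lt_0_compat; nra. Qed.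

Lemma p_s_ge1 p s : 1 < p -> 0 <= s <= 1 -> 1 <= p_s p s.
Proof.
  intros Hp Hs; unfold p_s; apply Rmult_le_reg_r with (1 + s * (p - 1)); [nra |].
  unfold Rdiv; rewrite Rmult_assoc, Rinv_l by nra; nra.
Qed.

Lemma p_s_antitone p s t : 1 < p -> 0 <= t <= s -> p_s p s <= p_s p t.
Proof.
  intros Hp Hts; unfold p_s, Rdiv; apply Rmult_le_compat_l; [lra |].
  apply Rinv_le_contravar; nra.
Qed.

Lemma p_s_0 p : p_s p 0 = p.
Proof. unfold p_s; rewrite Rmult_0_l, Rplus_0_r; apply Rdiv_1_r. Qed.

Lemma p_s_1 p : 1 < p -> p_s p 1 = 1.
Proof. intros Hp; unfold p_s; field; lra. Qed.

Lemma p_s_exponent p s : 1 < p -> 0 <= s -> (a_exp p + 1) / p_s p s = a_exp p + s.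
Proof. intros Hp Hs; unfold p_s, a_exp; field; split; nra. Qed.

Lemma p_s_ratio p s r : 1 < p -> 0 <= r -> 0 <= s ->
  p_s p s / p_s p r = (r + a_exp p) / (a_exp p + s).
Proof. intros Hp Hr Hs; unfold p_s, a_exp; field; repeat split; nra. Qed.

Lemma tau_le_tau0 p tau0 t :
  1 < p -> 0 < tau0 -> 0 < t <= t0_of p tau0 -> Rpower t (a_exp p + 1) <= tau0.
Proof.
  intros Hp Htau0 Ht.
  assert (Ha : 0 < a_exp p) by (apply Rinv_0_lt_compat; lra).
  apply Rle_trans with (Rpower (t0_of p tau0) (a_exp p + 1)); [apply Rle_Rpower_l; lra |].
  unfold t0_of; rewrite Rpower_mult.
  replace (/ (1 + a_exp p) * (a_exp p + 1)) with 1 by (field; lra).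
  rewrite Rpower_1 by exact Htau0; lra.
Qed.

Section WeightedSpaces.
Variable w : nat -> R.
Hypothesis w_pos : forall n, 0 < w n.

Lemma ratio_ge0 x n : 0 <= Rabs (x n) / w n.
Proof. apply Rdiv_le_0_compat; [apply Rabs_pos | apply w_pos]. Qed.

Lemma lp_term_ratio q x n : lp_term q w x n = w n * rpow (Rabs (x n) / w n) q.
Proof.
  pose proof (w_pos n) as Hw. unfold lp_term, Rdiv.
  assert (Hw' : 0 < / w n) by (apply Rinv_0_lt_compat, Hw).
  rewrite rpow_mult_distr, (rpow_Rpower (/ w n)) by (apply Rabs_pos || lra).
  assert (Hinv : Rpower (/ w n) q = Rpower (w n) (- q))
    by (unfold Rpower; rewrite ln_Rinv by exact Hw; f_equal; ring).
  replace (1 - q) with (1 + - q) by ring.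
  rewrite Hinv, Rpower_plus, Rpower_1 by exact Hw; ring.
Qed.

Lemma lp_term_ge0 q x n : 0 <= lp_term q w x n.
Proof. apply Rmult_le_pos; [left; apply Rpower_gt0 | apply rpow_ge0]. Qed.

Lemma lp_norm_ge0 q x : 0 <= lp_norm q w x.
Proof. apply rpow_ge0. Qed.

Lemma Series_lp_term_ge0 q x : in_lp q w x -> 0 <= Series (lp_term q w x).
Proof. apply Series_ge0; intros n; apply lp_term_ge0. Qed.

Lemma ratio_pow_le_Series q x n :
  in_lp q w x -> w n * rpow (Rabs (x n) / w n) q <= Series (lp_term q w x).
Proof.
  intros Hx; rewrite <- lp_term_ratio; apply term_le_Series; [apply lp_term_ge0 | exact Hx].
Qed.

Lemma lp_term_1 x n : lp_term 1 w x n = Rabs (x n).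
Proof.
  unfold lp_term; rewrite Rminus_diag, Rpower_O, rpow_1 by (apply w_pos || apply Rabs_pos); ring.
Qed.

Lemma in_lp_1_iff x : in_lp 1 w x <-> in_l1 x.
Proof. split; apply ex_series_ext; intros n; rewrite lp_term_1; reflexivity. Qed.

Lemma lp_norm_1 x : in_l1 x -> lp_norm 1 w x = l1_norm x.
Proof.
  intros Hx; unfold lp_norm, l1_norm; rewrite (Series_ext _ _ (lp_term_1 x)), Rinv_1.
  apply rpow_1, Series_ge0; [intros n; apply Rabs_pos | exact Hx].
Qed.

Lemma lp_mult_contraction q (m : nat -> R) x :
  0 < q -> (forall n, Rabs (m n) <= 1) -> in_lp q w x ->
  in_lp q w (fun n => m n * x n) /\ lp_norm q w (fun n => m n * x n) <= lp_norm q w x.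
Proof.
  intros Hq Hm Hx.
  assert (Hterm : forall n, 0 <= lp_term q w (fun n => m n * x n) n <= lp_term q w x n).
  { intros n; split; [apply lp_term_ge0 |]; unfold lp_term.
    apply Rmult_le_compat_l; [left; apply Rpower_gt0 |]; apply rpow_le_l; [lra |].
    rewrite Rabs_mult; pose proof (Hm n); pose proof (Rabs_pos (x n)).
    pose proof (Rabs_pos (m n)); split; nra. }
  assert (Hin : in_lp q w (fun n => m n * x n)) by (apply (ex_series_le_nonneg _ _ Hterm Hx)).
  split; [exact Hin |]; unfold lp_norm.
  apply rpow_le_l; [left; apply Rinv_0_lt_compat, Hq |].
  split; [apply Series_lp_term_ge0, Hin | apply Series_le; [exact Hterm | exact Hx]].
Qed.

Lemma lp_norm_interpolate q r x M :
  0 < q <= r -> in_lp q w x -> 0 <= M -> (forall n, Rabs (x n) / w n <= M) ->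
  in_lp r w x /\ lp_norm r w x <= rpow M (1 - q / r) * rpow (lp_norm q w x) (q / r).
Proof.
  intros Hqr Hx HM HxM.
  assert (Hterm : forall n, 0 <= lp_term r w x n <= rpow M (r - q) * lp_term q w x n).
  { intros n; split; [apply lp_term_ge0 |]; rewrite !lp_term_ratio.
    replace r with (q + (r - q)) at 1 by ring; rewrite rpow_plus by apply ratio_ge0.
    pose proof (rpow_le_l _ _ (r - q) ltac:(lra) (conj (ratio_ge0 x n) (HxM n))).
    assert (0 <= w n * rpow (Rabs (x n) / w n) q)
      by (apply Rmult_le_pos; [left; apply w_pos | apply rpow_ge0]).
    nra. }
  assert (Hx' : ex_series (fun n => rpow M (r - q) * lp_term q w x n))
    by (apply (ex_series_scal_l _ _ Hx)).
  assert (Hin : in_lp r w x) by (apply (ex_series_le_nonneg _ _ Hterm Hx')).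
  split; [exact Hin |].
  assert (HS : Series (lp_term r w x) <= rpow M (r - q) * Series (lp_term q w x))
    by (rewrite <- Series_scal_l; apply Series_le; [exact Hterm | exact Hx']).
  pose proof (Series_lp_term_ge0 q x Hx) as HS0.
  unfold lp_norm.
  apply Rle_trans with (rpow (rpow M (r - q) * Series (lp_term q w x)) (/ r)).
  - apply rpow_le_l; [left; apply Rinv_0_lt_compat; lra |].
    split; [apply Series_lp_term_ge0, Hin | exact HS].
  - rewrite rpow_mult_distr, !rpow_rpow by (try apply rpow_ge0; assumption).
    replace ((r - q) * / r) with (1 - q / r) by (field; lra).
    replace (/ q * (q / r)) with (/ r) by (field; lra). lra.
Qed.

Lemma linf_norm_bounds x B :
  (forall n, Rabs (x n) / w n <= B) ->
  in_linf w x /\ (forall n, Rabs (x n) / w n <= linf_norm w x) /\ linf_norm w x <= B.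
Proof.
  intros HB.
  assert (Habs : forall n, Rabs (x n / w n) = Rabs (x n) / w n)
    by (intros n; pose proof (w_pos n); rewrite Rabs_div, (Rabs_pos_eq (w n)); lra).
  split; [exists B; intros n; rewrite Habs; apply HB |].
  destruct (Sup_seq_bounded (fun n => Rabs (x n / w n)) B) as [Hge Hle].
  { intros n; rewrite Habs; split; [apply ratio_ge0 | apply HB]. }
  split; [intros n; rewrite <- Habs; apply Hge | exact Hle].
Qed.

Lemma ratio_mult_sub_le q c m x n :
  1 <= q -> 0 <= c -> Rabs (m - 1) <= 1 -> Rabs (m - 1) <= c * w n -> in_lp q w x ->
  Rabs (m * x n - x n) / w n <= rpow c (/ q) * lp_norm q w x.
Proof.
  intros Hq Hc Hm1 Hmc Hx.
  pose proof (ratio_pow_le_Series q x n Hx) as HS.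
  set (z := Rabs (m - 1)) in *; set (y := Rabs (x n) / w n) in *.
  assert (Hz : 0 <= z) by apply Rabs_pos. assert (Hy : 0 <= y) by apply ratio_ge0.
  replace (Rabs (m * x n - x n) / w n) with (z * y)
    by (unfold z, y, Rdiv; replace (m * x n - x n) with ((m - 1) * x n) by ring;
        rewrite Rabs_mult; ring).
  unfold lp_norm; rewrite <- rpow_mult_distr by (try apply Series_lp_term_ge0; assumption).
  apply le_rpow_inv_of_rpow_le; [apply Rmult_le_pos; assumption | lra |].
  (* (z y)^q <= z y^q <= c w y^q, since z <= 1 <= q *)
  pose proof (rpow_le_self z q (conj Hz Hm1) Hq); pose proof (rpow_ge0 y q).
  rewrite rpow_mult_distr by assumption.
  apply Rle_trans with (z * rpow y q); [apply Rmult_le_compat_r; assumption |].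
  apply Rle_trans with (c * (w n * rpow y q)); [nra |].
  apply Rmult_le_compat_l; assumption.
Qed.

Lemma l1_mult_le q (m : nat -> R) A x :
  1 <= q -> 0 < A -> (forall n, 0 <= m n <= 1) ->
  ex_series (fun n => w n * m n) -> Series (fun n => w n * m n) <= A -> in_lp q w x ->
  in_l1 (fun n => m n * x n) /\
  l1_norm (fun n => m n * x n) <= 2 * Rpower A (1 - / q) * lp_norm q w x.
Proof.
  intros Hq HA Hm Hwm HwmA Hx.
  set (bound := fun lam n => lam * (w n * m n) + Rpower lam (1 - q) * lp_term q w x n).
  assert (Hbound : forall lam, 0 < lam -> forall n, 0 <= Rabs (m n * x n) <= bound lam n).
  { intros lam Hlam n; split; [apply Rabs_pos |]; unfold bound; rewrite lp_term_ratio.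
    pose proof (w_pos n); pose proof (ratio_ge0 x n).
    replace (Rabs (m n * x n)) with (w n * (m n * (Rabs (x n) / w n)))
      by (rewrite Rabs_mult, (Rabs_pos_eq (m n)) by apply Hm; field; lra).
    pose proof (young_split (m n) (Rabs (x n) / w n) lam q (Hm n) ltac:(assumption) Hlam Hq).
    nra. }
  assert (Hex : forall lam, ex_series (bound lam)).
  { intros lam; apply (ex_series_plus _ _ (ex_series_scal_l _ _ Hwm) (ex_series_scal_l _ _ Hx)). }
  assert (Hin : in_l1 (fun n => m n * x n))
    by (apply (ex_series_le_nonneg _ _ (Hbound 1 Rlt_0_1) (Hex 1))).
  split; [exact Hin |].
  apply le_of_young_family; [exact HA | apply Series_lp_term_ge0, Hx | lra |].
  intros lam Hlam.
  apply Rle_trans with (Series (bound lam));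
    [apply Series_le; [apply Hbound, Hlam | apply Hex] |].
  unfold bound; rewrite Series_plus, !Series_scal_l
    by (apply (ex_series_scal_l _ _ Hwm) || apply (ex_series_scal_l _ _ Hx)).
  pose proof (Rpower_gt0 lam (1 - q)); apply Rplus_le_compat_r, Rmult_le_compat_l; lra.
Qed.

Hypothesis w_ge_w0 : forall n, w 0%nat <= w n.

Lemma ratio_le_lp_norm q x n :
  0 < q -> in_lp q w x -> Rabs (x n) / w n <= rpow (/ w 0%nat) (/ q) * lp_norm q w x.
Proof.
  intros Hq Hx. unfold lp_norm.
  assert (Hw0 : 0 < / w 0%nat) by apply Rinv_0_lt_compat, w_pos.
  rewrite <- rpow_mult_distr by (lra || apply Series_lp_term_ge0, Hx).
  apply le_rpow_inv_of_rpow_le; [apply ratio_ge0 | exact Hq |].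
  (* w 0 y^q <= w n y^q <= sum of all terms *)
  pose proof (ratio_pow_le_Series q x n Hx); pose proof (rpow_ge0 (Rabs (x n) / w n) q).
  pose proof (w_ge_w0 n); pose proof (w_pos 0%nat).
  apply Rmult_le_reg_l with (w 0%nat); [exact (w_pos 0%nat) |].
  rewrite <- Rmult_assoc, Rinv_r, Rmult_1_l by lra; nra.
Qed.

Lemma lp_linf_embed q :
  0 < q -> cont_embed (in_lp q w) (lp_norm q w) (in_linf w) (linf_norm w).
Proof.
  intros Hq; split; [| exists (rpow (/ w 0%nat) (/ q)); split; [apply rpow_ge0 |]]; intros x Hx;
    apply (linf_norm_bounds x _ (fun n => ratio_le_lp_norm q x n Hq Hx)).
Qed.

Lemma lp_embed q r :
  0 < q <= r -> cont_embed (in_lp q w) (lp_norm q w) (in_lp r w) (lp_norm r w).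
Proof.
  intros Hqr. set (K := rpow (/ w 0%nat) (/ q)).
  assert (H : forall x, in_lp q w x ->
                in_lp r w x /\ lp_norm r w x <= rpow K (1 - q / r) * lp_norm q w x).
  { intros x Hx. pose proof (lp_norm_ge0 q x).
    destruct (lp_norm_interpolate q r x (K * lp_norm q w x) Hqr Hx) as [Hin Hle].
    - apply Rmult_le_pos; [apply rpow_ge0 | assumption].
    - intros n; apply ratio_le_lp_norm; [lra | exact Hx].
    - split; [exact Hin |].
      rewrite rpow_mult_distr, Rmult_assoc, <- rpow_plus in Hle by (try apply rpow_ge0; assumption).
      replace (1 - q / r + q / r) with 1 in Hle by ring; rewrite rpow_1 in Hle; assumption. }
  split; [intros x Hx; apply H, Hx |].
  exists (rpow K (1 - q / r)); split; [apply rpow_ge0 | intros x Hx; apply H, Hx].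
Qed.

Lemma l1_lp_embed p : 1 <= p -> cont_embed in_l1 l1_norm (in_lp p w) (lp_norm p w).
Proof.
  intros Hp; destruct (lp_embed 1 p ltac:(lra)) as [Hmem [C [HC Hle]]].
  split; [intros x Hx; apply Hmem, in_lp_1_iff, Hx |].
  exists C; split; [exact HC |]; intros x Hx.
  rewrite <- lp_norm_1 by exact Hx; apply Hle, in_lp_1_iff, Hx.
Qed.

Lemma lp_norm_p_s_interpolate p s r x :
  1 < p -> 0 < s <= 1 -> 0 <= r < s -> in_lp (p_s p s) w x ->
  lp_norm (p_s p r) w x <=
    rpow (lp_norm (p_s p s) w x) ((r + a_exp p) / (a_exp p + s))
    * rpow (linf_norm w x) ((s - r) / (a_exp p + s)).
Proof.
  intros Hp Hs Hr Hx.
  assert (Ha : 0 < a_exp p) by (apply Rinv_0_lt_compat; lra).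
  assert (Hq : 0 < p_s p s <= p_s p r) by (split; [apply p_s_pos | apply p_s_antitone]; lra).
  destruct (linf_norm_bounds x _ (fun n => ratio_le_lp_norm _ x n (proj1 Hq) Hx))
    as [_ [Hratio _]].
  assert (HM : 0 <= linf_norm w x)
    by (eapply Rle_trans; [apply (ratio_ge0 x 0%nat) | apply Hratio]).
  destruct (lp_norm_interpolate _ _ x _ Hq Hx HM Hratio) as [_ Hle].
  rewrite p_s_ratio in Hle by lra.
  replace (1 - (r + a_exp p) / (a_exp p + s)) with ((s - r) / (a_exp p + s)) in Hle
    by (field; lra).
  lra.
Qed.

End WeightedSpaces.

Lemma rpow_tau_p_s p s t :
  1 < p -> 0 <= s -> 0 < t ->
  rpow (Rpower t (a_exp p + 1)) (/ p_s p s) = rpow t (a_exp p + s).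
Proof.
  intros Hp Hs Ht; rewrite !rpow_Rpower by (apply Rpower_gt0 || exact Ht).
  rewrite Rpower_mult, <- p_s_exponent with (s := s) by assumption; reflexivity.
Qed.

Lemma Rpower_inv_tau_p_s p s t :
  1 < p -> 0 <= s -> 0 < t ->
  Rpower (/ Rpower t (a_exp p + 1)) (1 - / p_s p s) = rpow t (s - 1).
Proof.
  intros Hp Hs Ht; rewrite rpow_Rpower by exact Ht.
  assert (Hinv : forall y c, 0 < y -> Rpower (/ y) c = Rpower y (- c))
    by (intros y c Hy; unfold Rpower; rewrite ln_Rinv by exact Hy; f_equal; ring).
  rewrite Hinv, Rpower_mult by apply Rpower_gt0; f_equal.
  pose proof (p_s_exponent p s Hp Hs) as He; unfold Rdiv in He; lra.
Qed.

Section SmoothingOperators.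
Variables (p : R) (w : nat -> R) (f : R -> R).
Hypothesis p_gt1 : 1 < p.
Hypothesis w_pos : forall n, 0 < w n.
Hypothesis f_C1 : C1_nonneg f.
Hypothesis f_range : forall u, 0 <= u -> 0 <= f u <= 1.

Lemma f_scaled_range tau n : 0 <= tau -> 0 <= f (tau * w n) <= 1.
Proof. intros Htau; apply f_range, Rmult_le_pos; [exact Htau | left; apply w_pos]. Qed.

Lemma f_scaled_continuous e t n :
  0 < t -> vanishes_near (fun t' => 0 < t') t
             (fun t' => Rabs (f (Rpower t' e * w n) - f (Rpower t e * w n))).
Proof.
  intros Ht eps Heps. pose proof (w_pos n) as Hw.
  assert (Hu0 : 0 <= Rpower t e * w n)
    by (apply Rmult_le_pos; left; [apply Rpower_gt0 | exact Hw]).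
  destruct (C1_continuous f _ f_C1 Hu0 eps Heps) as [d1 [Hd1 Hf]].
  destruct (Rpower_continuous_l e t Ht (d1 / w n)) as [d2 [Hd2 Hpow]];
    [apply Rdiv_lt_0_compat; assumption |].
  exists d2; split; [exact Hd2 |]; intros t' Ht' Htd.
  apply Hf; [apply Rmult_le_pos; left; [apply Rpower_gt0 | exact Hw] |].
  replace (Rpower t' e * w n - Rpower t e * w n) with ((Rpower t' e - Rpower t e) * w n) by ring.
  rewrite Rabs_mult, (Rabs_pos_eq (w n)) by lra.
  specialize (Hpow t' Ht' Htd); apply Rlt_div_r; assumption.
Qed.

Lemma P_op_contraction q t :
  0 < q -> op_bounded_by (in_lp q w) (lp_norm q w) (in_lp q w) (lp_norm q w) (P_op f w p t) 1.
Proof.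
  intros Hq x Hx; rewrite Rmult_1_l; apply lp_mult_contraction; [exact Hq | | exact Hx].
  intros n; pose proof (f_scaled_range (Rpower t (a_exp p + 1)) n (Rlt_le _ _ (Rpower_gt0 _ _))).
  rewrite Rabs_pos_eq; lra.
Qed.

Lemma P_op_uniformly_bounded s t0 :
  0 <= s -> 0 < t0 ->
  (forall t, 0 < t <= t0 -> forall x,
     in_lp (p_s p s) w x -> in_lp (p_s p s) w (P_op f w p t x)) /\
  (forall t, 0 < t <= t0 ->
     is_finite (opnorm (in_lp (p_s p s) w) (lp_norm (p_s p s) w)
                       (in_lp (p_s p s) w) (lp_norm (p_s p s) w) (P_op f w p t))) /\
  is_finite (CP_sup f w p t0 s).
Proof.
  intros Hs Ht0.
  assert (HP : forall t, 0 < t <= t0 ->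
            op_bounded_by (in_lp (p_s p s) w) (lp_norm (p_s p s) w)
                          (in_lp (p_s p s) w) (lp_norm (p_s p s) w) (P_op f w p t) 1)
    by (intros t _; apply P_op_contraction, p_s_pos; assumption).
  split; [intros t Ht x Hx; apply (HP t Ht x Hx) |].
  split; [intros t Ht; apply (opnorm_finite _ _ _ _ _ 1); [lra | apply HP, Ht] |].
  apply CP_sup_finite; assumption.
Qed.

Lemma lp_term_P_op_sub_le t t' x n :
  let jump := Rabs (f (Rpower t' (a_exp p + 1) * w n) - f (Rpower t (a_exp p + 1) * w n)) in
  0 <= lp_term p w (fun n => P_op f w p t' x n - P_op f w p t x n) n <= jump * lp_term p w x n
  /\ jump <= 1.
Proof.
  intros jump.
  pose proof (f_scaled_range (Rpower t' (a_exp p + 1)) n (Rlt_le _ _ (Rpower_gt0 _ _))).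
  pose proof (f_scaled_range (Rpower t (a_exp p + 1)) n (Rlt_le _ _ (Rpower_gt0 _ _))).
  assert (Hj : 0 <= jump <= 1) by (split; [apply Rabs_pos | apply Rabs_le; lra]).
  replace (lp_term p w (fun n => P_op f w p t' x n - P_op f w p t x n) n)
    with (rpow jump p * lp_term p w x n)
    by (unfold jump, lp_term, P_op; rewrite <- Rmult_minus_distr_r, Rabs_mult, rpow_mult_distr
          by apply Rabs_pos; ring).
  (* jump <= 1 <= p, so jump^p <= jump *)
  pose proof (rpow_le_self _ p Hj ltac:(lra)); pose proof (rpow_ge0 jump p).
  pose proof (lp_term_ge0 w p x n).
  split; [split; [apply Rmult_le_pos |] |]; nra.
Qed.

Lemma P_op_continuous x t :
  in_lp p w x -> 0 < t ->
  vanishes_near (fun t' => 0 < t') t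
    (fun t' => lp_norm p w (fun n => P_op f w p t' x n - P_op f w p t x n)).
Proof.
  intros Hx Ht eps Heps.
  set (D := fun t' n => lp_term p w (fun n => P_op f w p t' x n - P_op f w p t x n) n).
  assert (Hdom : forall t' n, 0 < t' -> 0 <= D t' n <= lp_term p w x n).
  { intros t' n _; unfold D; destruct (lp_term_P_op_sub_le t t' x n) as [[HD0 HDj] Hj1].
    pose proof (lp_term_ge0 w p x n); split; nra. }
  assert (Hterm : forall n, vanishes_near (fun t' => 0 < t') t (fun t' => D t' n)).
  { intros n eta Heta; pose proof (lp_term_ge0 w p x n) as Hc.
    destruct (f_scaled_continuous (a_exp p + 1) t n Ht (eta / (lp_term p w x n + 1)))
      as [d [Hd Hj]]; [apply Rdiv_lt_0_compat; lra |].
    exists d; split; [exact Hd |]; intros t' Ht' Htd; unfold D.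
    specialize (Hj t' Ht' Htd); apply Rlt_div_r in Hj; [| lra].
    destruct (lp_term_P_op_sub_le t t' x n) as [[_ HDj] _]; nra. }
  destruct (Series_dominated_vanishes_near _ t D _ Hx Hdom Hterm (rpow eps p)) as [d [Hd HS]];
    [apply rpow_gt0, Heps |].
  exists d; split; [exact Hd |]; intros t' Ht' Htd.
  unfold lp_norm; rewrite <- (rpow_rpow_inv eps p) by lra.
  apply rpow_lt_l; [apply Rinv_0_lt_compat; lra |].
  pose proof (fun n => Hdom t' n Ht') as Hdom'.
  split; [apply Series_ge0; [apply Hdom' | apply (ex_series_le_nonneg _ _ Hdom' Hx)] |].
  apply (HS t' Ht' Htd).
Qed.

Hypothesis f_0 : f 0 = 1.

Lemma P_op_sub_id_bound s :
  0 <= s <= 1 ->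
  exists C, 0 <= C /\ forall t, 0 < t ->
    op_bounded_by (in_lp (p_s p s) w) (lp_norm (p_s p s) w) (in_linf w) (linf_norm w)
                  (fun x n => P_op f w p t x n - x n) (C * rpow t (a_exp p + s)).
Proof.
  intros Hs; set (q := p_s p s); assert (Hq : 1 <= q) by (apply p_s_ge1; assumption).
  destruct (C1_lipschitz_at_0 f 1 f_C1) as [K [HK HfK]].
  { intros u Hu; rewrite f_0; pose proof (f_range u Hu); apply Rabs_le; lra. }
  exists (rpow K (/ q)); split; [apply rpow_ge0 |]; intros t Ht x Hx.
  set (tau := Rpower t (a_exp p + 1)). assert (Htau : 0 < tau) by apply Rpower_gt0.
  assert (Hratio : forall n,
            Rabs (f (tau * w n) * x n - x n) / w n <= rpow (K * tau) (/ q) * lp_norm q w x).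
  { intros n; pose proof (f_scaled_range tau n (Rlt_le _ _ Htau)).
    apply ratio_mult_sub_le; [exact w_pos | exact Hq | nra | apply Rabs_le; lra | | exact Hx].
    rewrite Rmult_assoc, <- f_0; apply HfK, Rmult_le_pos; [lra | left; apply w_pos]. }
  destruct (linf_norm_bounds w w_pos (fun n => P_op f w p t x n - x n) _ Hratio) as [Hin [_ Hle]].
  split; [exact Hin |].
  unfold tau, q in Hle.
  rewrite rpow_mult_distr, rpow_tau_p_s in Hle by (lra || (left; apply Rpower_gt0)).
  exact Hle.
Qed.

Lemma P_op_l1_bound tau0 Cw s :
  0 < tau0 -> 0 < Cw ->
  (forall tau, 0 < tau <= tau0 ->
     ex_series (fun n => w n * f (tau * w n)) /\
     Series (fun n => w n * f (tau * w n)) <= Cw / tau) ->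
  0 <= s <= 1 ->
  exists C, 0 <= C /\ forall t, 0 < t <= t0_of p tau0 ->
    op_bounded_by (in_lp (p_s p s) w) (lp_norm (p_s p s) w) in_l1 l1_norm
                  (P_op f w p t) (C * rpow t (s - 1)).
Proof.
  intros Htau0 HCw Hsum Hs.
  set (q := p_s p s); assert (Hq : 1 <= q) by (apply p_s_ge1; assumption).
  exists (2 * Rpower Cw (1 - / q)); split; [pose proof (Rpower_gt0 Cw (1 - / q)); lra |].
  intros t Ht x Hx.
  set (tau := Rpower t (a_exp p + 1)). assert (Htau : 0 < tau) by apply Rpower_gt0.
  destruct (Hsum tau (conj Htau (tau_le_tau0 p tau0 t p_gt1 Htau0 Ht))) as [Hex HS].
  destruct (l1_mult_le w w_pos q (fun n => f (tau * w n)) (Cw / tau) x Hq) as [Hin Hle];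
    try assumption; [apply Rdiv_lt_0_compat; assumption | intros n; apply f_scaled_range; lra |].
  split; [exact Hin |].
  unfold Rdiv, tau, q in Hle; rewrite <- Rpower_mult_distr, Rpower_inv_tau_p_s in Hle
    by (lra || apply Rinv_0_lt_compat, Rpower_gt0).
  rewrite <- Rmult_assoc in Hle; exact Hle.
Qed.

Lemma P_op_projection_estimates tau0 Cw s :
  0 < tau0 -> 0 < Cw ->
  (forall tau, 0 < tau <= tau0 ->
     ex_series (fun n => w n * f (tau * w n)) /\
     Series (fun n => w n * f (tau * w n)) <= Cw / tau) ->
  0 < s < 1 ->
  exists CProj, real (CP_sup f w p (t0_of p tau0) s) + 1 <= CProj /\
    forall t, 0 < t <= t0_of p tau0 ->
      Rbar_le (opnorm (in_lp (p_s p s) w) (lp_norm (p_s p s) w) (in_linf w) (linf_norm w)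
                      (fun x n => P_op f w p t x n - x n))
              (CProj * rpow t (a_exp p + s)) /\
      Rbar_le (opnorm (in_lp (p_s p s) w) (lp_norm (p_s p s) w) in_l1 l1_norm (P_op f w p t))
              (CProj * rpow t (s - 1)).
Proof.
  intros Htau0 HCw Hsum Hs.
  destruct (P_op_sub_id_bound s ltac:(lra)) as [C1 [HC1 Hlinf]].
  destruct (P_op_l1_bound tau0 Cw s Htau0 HCw Hsum ltac:(lra)) as [C2 [HC2 Hl1]].
  set (CProj := Rmax (real (CP_sup f w p (t0_of p tau0) s) + 1) (Rmax C1 C2)).
  exists CProj; split; [apply Rmax_l |]; intros t Ht.
  assert (Hscale : forall C e, 0 <= C <= Rmax C1 C2 -> 0 <= C * rpow t e <= CProj * rpow t e).
  { intros C e HC; pose proof (rpow_ge0 t e); split; [nra |].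
    apply Rmult_le_compat_r; [lra | eapply Rle_trans; [apply HC | apply Rmax_r]]. }
  split.
  - apply (opnorm_le_weaken _ _ _ _ _ (C1 * rpow t (a_exp p + s))); [| apply Hlinf, Ht].
    apply Hscale; split; [exact HC1 | apply Rmax_l].
  - apply (opnorm_le_weaken _ _ _ _ _ (C2 * rpow t (s - 1))); [| apply Hl1, Ht].
    apply Hscale; split; [exact HC2 | apply Rmax_r].
Qed.

End SmoothingOperators.

Theorem proposition1 (p : R) (w : nat -> R) (f : R -> R) (tau0 Cw : R) :
  1 < p ->
  (forall n, 0 < w n) ->
  (forall n1 n2 : nat, (n1 < n2)%nat -> w n1 <= w n2) ->
  is_lim_seq w p_infty ->
  C1_nonneg f ->
  (forall x, 0 <= x -> 0 <= f x) ->
  (forall x y, 0 <= x <= y -> f y <= f x) ->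
  f 0 = 1 ->
  0 < tau0 -> 0 < Cw ->
  (forall tau, 0 < tau <= tau0 ->
     ex_series (fun n => w n * f (tau * w n)) /\
     Series (fun n => w n * f (tau * w n)) <= Cw / tau) ->
  let a := a_exp p in
  let t0 := t0_of p tau0 in
  (* (i) *)
  (cont_embed in_l1 l1_norm (in_lp p w) (lp_norm p w) /\
   cont_embed (in_lp p w) (lp_norm p w) (in_linf w) (linf_norm w)) /\
  (* (ii) *)
  ((forall x, in_lp (p_s p 0) w x <-> in_lp p w x) /\
   (forall x, in_lp p w x -> lp_norm (p_s p 0) w x = lp_norm p w x) /\
   (forall x, in_lp (p_s p 1) w x <-> in_l1 x) /\
   (forall x, in_l1 x -> lp_norm (p_s p 1) w x = l1_norm x) /\
   (forall s t, 0 <= t <= s -> s <= 1 ->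
      cont_embed (in_lp (p_s p s) w) (lp_norm (p_s p s) w)
                 (in_lp (p_s p t) w) (lp_norm (p_s p t) w))) /\
  (* (iii) *)
  (forall s r, 0 < s <= 1 -> 0 <= r < s ->
     exists L, 0 < L /\
       forall x, in_lp (p_s p s) w x ->
         lp_norm (p_s p r) w x <=
           L * rpow (lp_norm (p_s p s) w x) ((r + a) / (a + s))
             * rpow (linf_norm w x) ((s - r) / (a + s))) /\
  (* (iv) *)
  ((forall s, 0 <= s <= 1 ->
      (forall t, 0 < t <= t0 -> forall x,
         in_lp (p_s p s) w x -> in_lp (p_s p s) w (P_op f w p t x)) /\
      (forall t, 0 < t <= t0 ->
         is_finite (opnorm (in_lp (p_s p s) w) (lp_norm (p_s p s) w)
                           (in_lp (p_s p s) w) (lp_norm (p_s p s) w)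
                           (P_op f w p t))) /\
      is_finite (CP_sup f w p t0 s)) /\
   (forall x, in_lp p w x ->
      forall t, 0 < t <= t0 -> forall eps, 0 < eps ->
        exists delta, 0 < delta /\
          forall t', 0 < t' <= t0 -> Rabs (t' - t) < delta ->
            lp_norm p w (fun n => P_op f w p t' x n - P_op f w p t x n) < eps)) /\
  (* (v) *)
  (forall s, 0 < s < 1 ->
     exists CProj, real (CP_sup f w p t0 s) + 1 <= CProj /\
       forall t, 0 < t <= t0 ->
         Rbar_le (opnorm (in_lp (p_s p s) w) (lp_norm (p_s p s) w)
                         (in_linf w) (linf_norm w)
                         (fun x n => P_op f w p t x n - x n))
                 (CProj * rpow t (a + s)) /\
         Rbar_le (opnorm (in_lp (p_s p s) w) (lp_norm (p_s p s) w)
                         in_l1 l1_norm (P_op f w p t))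
                 (CProj * rpow t (s - 1))).
Proof.
  intros Hp Hw Hmono _ Hf Hf_ge0 Hf_anti Hf0 Htau0 HCw Hsum a t0.
  assert (Hw0 : forall n, w 0%nat <= w n) by (intros [| n]; [lra | apply Hmono; lia]).
  pose proof (f_unit_range f Hf_ge0 Hf_anti Hf0) as Hf01.
  split; [| split; [| split; [| split]]].
  - split; [apply l1_lp_embed | apply lp_linf_embed]; assumption || lra.
  - rewrite p_s_0, p_s_1 by exact Hp.
    split; [tauto |]; split; [reflexivity |].
    split; [intros x; apply in_lp_1_iff, Hw |]; split; [intros x; apply lp_norm_1, Hw |].
    intros s t Hts Hs1; apply lp_embed; [assumption | assumption |].
    split; [apply p_s_pos | apply p_s_antitone]; lra.
  - intros s r Hs Hr; exists 1; split; [lra |]; intros x Hx.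
    rewrite Rmult_1_l; apply lp_norm_p_s_interpolate; assumption.
  - split; [intros s Hs; apply P_op_uniformly_bounded; [assumption .. | lra | apply Rpower_gt0] |].
    intros x Hx t Ht eps Heps.
    destruct (P_op_continuous p w f Hp Hw Hf Hf01 x t Hx (proj1 Ht) eps Heps) as [d [Hd Hnear]].
    exists d; split; [exact Hd |]; intros t' Ht' Htd; apply Hnear; [apply Ht' | exact Htd].
  - intros s Hs; apply P_op_projection_estimates with (Cw := Cw); assumption.
Qed.
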